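(* Suppose that every even Gaussian integer $a+ib$ with integers $a>1$, $b>1$ can be written as $z=p+q$ with $p,q$ Gaussian primes lying in $Q=\{x+iy : x,y\in\mathbb{Z},\ x>0,\ y>0\}$. Then there are infinitely many positive integers $n$ such that $n^2+1$ is a rational prime.
   Context: Gaussian integers are the elements $a+ib$ of $\mathbb{Z}[i]$, with norm $N(a+ib)=a^2+b^2$. A Gaussian prime is an irreducible (equivalently, prime) element of $\mathbb{Z}[i]$. A Gaussian integer $z$ is called even if $N(z)$ is even (equivalently, $a+b$ is even, equivalently $z$ is divisible by $1+i$). $Q$ denotes the open first quadrant of Gaussian integers $\{a+ib: a>0, b>0\}$. *)

From Stdlib Require Import ZArith Znumtheory.
Open Scope Z_scope.

Record gauss := GI { re : Z; im : Z }.

Definition gadd (z w : gauss) : gauss := GI (re z + re w) (im z + im w).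
Definition gmul (z w : gauss) : gauss :=
  GI (re z * re w - im z * im w) (re z * im w + im z * re w).
Definition gzero : gauss := GI 0 0.
Definition gone : gauss := GI 1 0.

Definition gnorm (z : gauss) : Z := re z * re z + im z * im z.

Definition gunit (u : gauss) : Prop := exists v, gmul u v = gone.

Definition gprime (p : gauss) : Prop :=
  p <> gzero /\ ~ gunit p /\
  forall u v : gauss, p = gmul u v -> gunit u \/ gunit v.

Definition geven (z : gauss) : Prop := Z.Even (gnorm z).

Definition inQ (z : gauss) : Prop := 0 < re z /\ 0 < im z.

(** Decompose [2 + 2mi] with [m > N]: both summands lie in [Q] and their real
    parts add up to [2], so they are [1 + ib] and [1 + ib'] with [b + b' = 2m],
    and one of [b], [b'] is at least [m].  It remains to see that a Gaussian
    prime [1 + ib] has prime norm [1 + b^2].  If [d] were a proper divisor of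
    [1 + b^2], a Bezout generator [g] of the ideal [(1 + ib, d)] of the
    Euclidean ring [Z[i]] would divide [1 + ib], hence be a unit or an associate
    of [1 + ib].  Both are ruled out by the map [x + iy |-> x + by] modulo
    [1 + b^2], a ring morphism sending [i] to [b] and killing [1 + ib]. *)

From Stdlib Require Import ZArith Znumtheory Lia Wf_nat.
Open Scope Z_scope.

Definition gopp (z : gauss) : gauss := GI (- re z) (- im z).
Definition gsub (z w : gauss) : gauss := gadd z (gopp w).
Definition gdvd (g z : gauss) : Prop := exists q, z = gmul g q.

Lemma gauss_eq_dec (z w : gauss) : {z = w} + {z <> w}.
Proof. decide equality; apply Z.eq_dec. Qed.

Lemma gauss_ring_theory : ring_theory gzero gone gadd gmul gsub gopp eq.
Proof.
  split; intros;
    repeat match goal with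
    | z : gauss |- _ => let x := fresh "x" in let y := fresh "y" in destruct z as [x y]
    end;
    unfold gsub, gadd, gmul, gopp, gzero, gone; cbn [re im]; f_equal; ring.
Qed.

Add Ring gauss_ring : gauss_ring_theory.

Lemma gnorm_nonneg z : 0 <= gnorm z.
Proof. destruct z as [x y]; unfold gnorm; cbn [re im]; nia. Qed.

Lemma gnorm_pos z : z <> gzero -> 0 < gnorm z.
Proof.
  destruct z as [x y]; unfold gnorm, gzero; cbn [re im]; intro Hz.
  destruct (Z.eq_dec x 0), (Z.eq_dec y 0); subst; try congruence; nia.
Qed.

Lemma Z_div_round s m : 0 < m -> exists u, - m <= 2 * (s - m * u) < m.
Proof.
  intro Hm; exists ((2 * s + m) / (2 * m)).
  pose proof (Z.div_mod (2 * s + m) (2 * m) ltac:(lia)).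
  pose proof (Z.mod_pos_bound (2 * s + m) (2 * m) ltac:(lia)).
  lia.
Qed.

(* Round [a * conj g / N(g)] coordinatewise: [N(r) * N(g) = N(a conj g - N(g) q)]
   and each coordinate of the latter is at most [N(g) / 2] in absolute value. *)
Lemma gauss_div a g : g <> gzero ->
  exists q r, a = gadd (gmul g q) r /\ gnorm r < gnorm g.
Proof.
  intro Hg; pose proof (gnorm_pos g Hg) as Hm.
  destruct a as [a1 a2], g as [g1 g2]; unfold gnorm in *; cbn [re im] in *.
  set (m := g1 * g1 + g2 * g2) in *.
  destruct (Z_div_round (a1 * g1 + a2 * g2) m Hm) as [u Hu].
  destruct (Z_div_round (a2 * g1 - a1 * g2) m Hm) as [w Hw].
  exists (GI u w), (gsub (GI a1 a2) (gmul (GI g1 g2) (GI u w))).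
  split; [ring|].
  unfold gsub, gopp, gadd, gmul, gnorm; cbn [re im].
  set (r1 := a1 + - (g1 * u - g2 * w)); set (r2 := a2 + - (g1 * w + g2 * u)).
  assert (Hnorm : (r1 * r1 + r2 * r2) * m
    = (a1 * g1 + a2 * g2 - m * u) ^ 2 + (a2 * g1 - a1 * g2 - m * w) ^ 2)
    by (unfold r1, r2, m; ring).
  nia.
Qed.

Lemma gauss_bezout a c : exists g al be,
  g = gadd (gmul al a) (gmul be c) /\ gdvd g a /\ gdvd g c.
Proof.
  revert a.
  induction c as [c IH] using (well_founded_ind
    (well_founded_ltof _ (fun z => Z.to_nat (gnorm z)))); intro a.
  destruct (gauss_eq_dec c gzero) as [->|Hc].
  - exists a, gone, gzero; split; [ring|split].
    + exists gone; ring.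
    + exists gzero; ring.
  - destruct (gauss_div a c Hc) as [q [r [Ha Hr]]].
    destruct (IH r) with (a := c) as [g [al [be [Hg [[x Hx] [y Hy]]]]]].
    { unfold ltof; pose proof (gnorm_nonneg r); lia. }
    exists g, be, (gsub al (gmul be q)); split; [|split].
    + rewrite Hg, Ha; ring.
    + exists (gadd (gmul x q) y); rewrite Ha, Hx, Hy; ring.
    + exists x; exact Hx.
Qed.

(* Substituting [b] for [i]: a ring morphism [Z[i] -> Z/(1 + b^2)]. *)
Definition eval_i (b : Z) (z : gauss) : Z := re z + b * im z.

Lemma eval_i_add b z w : eval_i b (gadd z w) = eval_i b z + eval_i b w.
Proof. destruct z as [x y], w as [u v]; unfold eval_i, gadd; cbn [re im]; ring. Qed.

Lemma eval_i_mul_1_plus_ib b w : eval_i b (gmul (GI 1 b) w) = (b * b + 1) * re w.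
Proof. destruct w as [u v]; unfold eval_i, gmul; cbn [re im]; ring. Qed.

Lemma eval_i_mul_int b d w : eval_i b (gmul (GI d 0) w) = d * eval_i b w.
Proof. destruct w as [u v]; unfold eval_i, gmul; cbn [re im]; ring. Qed.

Lemma gone_notin_ideal_1_plus_ib_int b d al be : 1 < d -> (d | b * b + 1) ->
  gone <> gadd (gmul (GI 1 b) al) (gmul (GI d 0) be).
Proof.
  intros Hd [k Hk] Hone.
  apply (f_equal (eval_i b)) in Hone.
  rewrite eval_i_add, eval_i_mul_1_plus_ib, eval_i_mul_int, Hk in Hone.
  unfold eval_i at 1 in Hone; cbn [re im gone] in Hone.
  assert (Hd1 : (d | 1)) by (exists (k * re al + eval_i b be); lia).
  pose proof (Z.divide_pos_le d 1 ltac:(lia) Hd1); lia.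
Qed.

Lemma not_gdvd_1_plus_ib_int b d : 0 < d < b * b + 1 -> ~ gdvd (GI 1 b) (GI d 0).
Proof.
  intros Hd [w Hw].
  apply (f_equal (eval_i b)) in Hw.
  rewrite eval_i_mul_1_plus_ib in Hw; unfold eval_i at 1 in Hw; cbn [re im] in Hw.
  assert (Hdiv : (b * b + 1 | d)) by (exists (re w); lia).
  pose proof (Z.divide_pos_le (b * b + 1) d ltac:(lia) Hdiv); lia.
Qed.

Lemma prime_norm_of_gprime_1_plus_ib b : gprime (GI 1 b) -> prime (b * b + 1).
Proof.
  intros [_ [Hnunit Hirr]].
  destruct (prime_dec (b * b + 1)) as [|Hcomp]; [assumption|exfalso].
  assert (Hb : b <> 0) by (intros ->; apply Hnunit; exists gone; reflexivity).
  destruct (not_prime_divide (b * b + 1)) as [d [Hd Hdvd]]; [nia|assumption|].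
  destruct (gauss_bezout (GI 1 b) (GI d 0))
    as [g [al [be [Hg [[q Hq] [q' Hq']]]]]].
  destruct (Hirr g q Hq) as [[v Hv] | [v Hv]].
  - apply (gone_notin_ideal_1_plus_ib_int b d (gmul al v) (gmul be v)); [lia|assumption|].
    rewrite <- Hv, Hg; ring.
  - apply (not_gdvd_1_plus_ib_int b d); [lia|].
    exists (gmul v q').
    rewrite Hq', Hq; transitivity (gmul (gmul g (gmul q v)) q'); [rewrite Hv|]; ring.
Qed.

Theorem mainTheorem1 :
  (forall a b : Z, 1 < a -> 1 < b -> geven (GI a b) ->
     exists p q : gauss, gprime p /\ gprime q /\ inQ p /\ inQ q /\
                         GI a b = gadd p q) ->
  forall N : Z, exists n : Z, N < n /\ 0 < n /\ prime (n * n + 1).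
Proof.
  intros Hgoldbach N.
  set (m := Z.max N 1 + 1).
  assert (Hm : N < m /\ 0 < m) by lia; clearbody m.
  destruct (Hgoldbach 2 (2 * m)) as [[p1 p2] [[q1 q2] [Hp [Hq [Qp [Qq Hsum]]]]]];
    [lia | lia | exists (2 + 2 * m * m); unfold gnorm; cbn [re im]; ring |].
  clear Hgoldbach; unfold inQ in *; cbn [re im] in *.
  pose proof (f_equal re Hsum) as Hre; pose proof (f_equal im Hsum) as Him.
  cbn [re im gadd] in Hre, Him.
  assert (p1 = 1) by lia; assert (q1 = 1) by lia; subst p1 q1.
  destruct (Z_le_gt_dec m p2).
  - exists p2; split; [lia | split; [lia | now apply prime_norm_of_gprime_1_plus_ib]].
  - exists q2; split; [lia | split; [lia | now apply prime_norm_of_gprime_1_plus_ib]].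
Qed.
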